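(* The following statements are equivalent for $(X,\tau,\mathcal{P})$: (1) $(X,\tau,\mathcal{P})$ is an almost $\mathcal{P}P$-space; (2) every $z$-ideal of $C(X)_\mathcal{P}$ is a $z^0$-ideal; (3) every maximal ideal of $C(X)_\mathcal{P}$ is a $z^0$-ideal; (4) every maximal ideal of $C(X)_\mathcal{P}$ consists entirely of zero divisors; (5) the sum of any two ideals of $C(X)_\mathcal{P}$ consisting of zero divisors is either $C(X)_\mathcal{P}$ or consists of zero divisors; (6) for each non-unit $f\in C(X)_\mathcal{P}$ there exists a nonzero $g\in C(X)_\mathcal{P}$ with $P(f)\subseteq Ann(g)$.
   Context: Let $(X,\tau)$ be a $T_1$ topological space and $\mathcal{P}$ an ideal of closed subsets of $X$ (a nonempty family of closed sets closed under finite unions and under taking closed subsets). For $f\colon X\to\mathbb{R}$, $D_f$ denotes the set of points of discontinuity of $f$, and $C(X)_\mathcal{P}=\{f\colon X\to\mathbb{R} : \overline{D_f}\in\mathcal{P}\}$, a commutative ring with unity under pointwise operations. For $f\in C(X)_\mathcal{P}$, $Z_\mathcal{P}(f)=\{x: f(x)=0\}$, $coz(f)=X\setminus Z_\mathcal{P}(f)$; $X_\mathcal{P}$ is $X$ with the topology having base $\{coz(f): f\in C(X)_\mathcal{P}\}$, $int_{X_\mathcal{P}}$ its interior operator. $(X,\tau,\mathcal{P})$ is an almost $\mathcal{P}P$-space if for every $f\in C(X)_\mathcal{P}$ with $Z_\mathcal{P}(f)\neq\emptyset$ one has $int_{X_\mathcal{P}}(Z_\mathcal{P}(f))\neq\emptyset$.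 $Ann(g)=\{h: hg=0\}$. In a commutative ring $R$ with unity, $M(a)$ (resp. $P(a)$) is the intersection of all maximal (resp. minimal prime) ideals containing $a$; an ideal $I$ is a $z$-ideal if $a\in I\Rightarrow M(a)\subseteq I$, and a $z^0$-ideal if $a\in I\Rightarrow P(a)\subseteq I$. *)

From HB Require Import structures.
From mathcomp Require Import all_boot all_order all_algebra.
From mathcomp Require Import all_classical all_reals all_analysis.
Set Implicit Arguments. Unset Strict Implicit. Unset Printing Implicit Defensive.
Import Order.TTheory GRing.Theory Num.Theory.
Import numFieldNormedType.Exports.
Local Open Scope classical_set_scope.
Local Open Scope ring_scope.

Section Defs.
Variables (R : realType) (T : topologicalType).

Definition closed_ideal (P : set (set T)) : Prop :=
  [/\ P !=set0,
      (forall A, P A -> closed A),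
      (forall A B, P A -> P B -> P (A `|` B)) &
      (forall A B, P A -> closed B -> B `<=` A -> P B)].

Definition discont (f : T -> R) : set T := [set x | ~ {for x, continuous f}].

Definition CP (P : set (set T)) : set (T -> R) :=
  [set f | P (closure (discont f))].

Definition fadd (f g : T -> R) : T -> R := fun x => f x + g x.
Definition fmul (f g : T -> R) : T -> R := fun x => f x * g x.
Definition fzero : T -> R := fun _ => 0.
Definition fone : T -> R := fun _ => 1.

Definition ZP (f : T -> R) : set T := [set x | f x = 0].
Definition coz (f : T -> R) : set T := [set x | f x <> 0].

(** interior in X_P (topology with base {coz f : f in C(X)_P}): union of the
    basic open sets contained in A. *)
Definition intXP (P : set (set T)) (A : set T) : set T :=
  [set x | exists f, [/\ CP P f, f x <> 0 & coz f `<=` A]].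

Definition almost_PP (P : set (set T)) : Prop :=
  forall f, CP P f -> ZP f !=set0 -> intXP P (ZP f) !=set0.

Definition is_ideal (P : set (set T)) (I : set (T -> R)) : Prop :=
  [/\ I `<=` CP P, I fzero,
      (forall f g, I f -> I g -> I (fadd f g)) &
      (forall f g, I f -> CP P g -> I (fmul g f))].

Definition proper_ideal P I := is_ideal P I /\ ~ I fone.

Definition maximal_ideal P (M : set (T -> R)) : Prop :=
  proper_ideal P M /\
  forall J, proper_ideal P J -> M `<=` J -> J = M.

Definition prime_ideal P (Q : set (T -> R)) : Prop :=
  proper_ideal P Q /\
  forall f g, CP P f -> CP P g -> Q (fmul f g) -> Q f \/ Q g.

Definition minimal_prime P (Q : set (T -> R)) : Prop :=
  prime_ideal P Q /\
  forall Q', prime_ideal P Q' -> Q' `<=` Q -> Q' = Q.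

Definition Mset P (a : T -> R) : set (T -> R) :=
  [set h | CP P h /\ forall M, maximal_ideal P M -> M a -> M h].
Definition Pset P (a : T -> R) : set (T -> R) :=
  [set h | CP P h /\ forall Q, minimal_prime P Q -> Q a -> Q h].

Definition z_ideal P I := is_ideal P I /\ forall a, I a -> Mset P a `<=` I.
Definition z0_ideal P I := is_ideal P I /\ forall a, I a -> Pset P a `<=` I.

Definition zero_divisor P (f : T -> R) : Prop :=
  CP P f /\ exists g, [/\ CP P g, g <> fzero & fmul f g = fzero].

Definition is_unit P (f : T -> R) : Prop :=
  CP P f /\ exists g, CP P g /\ fmul f g = fone.

Definition Ann P (g : T -> R) : set (T -> R) :=
  [set h | CP P h /\ fmul h g = fzero].

Definition ideal_sum (I J : set (T -> R)) : set (T -> R) :=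
  [set h | exists f g, [/\ I f, J g & h = fadd f g]].

End Defs.

From mathcomp Require Import all_boot all_order all_algebra.
From mathcomp Require Import all_classical all_reals all_analysis.
From mathcomp Require Import lra ring.
Set Implicit Arguments. Unset Strict Implicit. Unset Printing Implicit Defensive.
Import Order.TTheory GRing.Theory Num.Theory.
Import numFieldNormedType.Exports.
Local Open Scope classical_set_scope.
Local Open Scope ring_scope.

(* Every condition is equivalent to: each f in C(X)_P with a zero, i.e. each
   non-unit, is a zero divisor; for (1) because an annihilator g <> 0 of f gives
   the basic open set coz g inside Z(f). Maximal ideals M satisfy
   "a in M, Z(a) <= Z(h) => h in M", and the ideals {f | f x = 0} are maximal.
   Minimal primes are the complements of maximal multiplicatively closed sets;
   hence elements of minimal primes are zero divisors and P(a) kills every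
   annihilator of a, which yields (2), (3), (4) and (6). For (5), a non-unit
   that is not identically zero is the sum f phi + f (1 - phi) of two zero
   divisors vanishing at a common point, phi a cut-off of f. *)

Section pointwise.
Variables (R : realType) (T : topologicalType).
Local Notation fzero := (@fzero R T).

Lemma fmul_eq0 (f g : T -> R) :
  fmul f g = fzero <-> forall x, f x = 0 \/ g x = 0.
Proof.
split => [fg0 x|fg0].
  by move/(congr1 (fun k => k x))/eqP: fg0; rewrite mulf_eq0 => /orP[]/eqP; auto.
by apply: funext => x; rewrite /fmul /fzero; case: (fg0 x) => ->; rewrite ?mul0r ?mulr0.
Qed.

Lemma coz_fmul (f g : T -> R) : coz (fmul f g) = coz f `&` coz g.
Proof.
apply/seteqP; split=> x; rewrite /coz /fmul /=.
  by move=> /eqP; rewrite mulf_eq0 negb_or => /andP[/eqP ? /eqP ?].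
by move=> [/eqP fx /eqP gx]; apply/eqP; rewrite mulf_neq0.
Qed.

Lemma fun_neq0 (g : T -> R) : g <> fzero -> exists y, g y <> 0.
Proof.
move=> ng; apply: contrapT => nex; apply: ng; apply: funext => y.
by apply: contrapT => gy; apply: nex; exists y.
Qed.

Lemma sqr_add_eq0 (u v : R) : u * u + v * v = 0 -> u = 0 /\ v = 0.
Proof. by move=> h; split; nra. Qed.

End pointwise.

Section ring_of_functions.
Variables (R : realType) (T : topologicalType) (P : set (set T)).
Hypothesis hP : closed_ideal P.
Local Notation CP := (@CP R T P).
Local Notation fzero := (@fzero R T).
Local Notation fone := (@fone R T).

Lemma CP_discont_sub (A : set T) (g : T -> R) : P A -> discont g `<=` A -> CP g.
Proof.
move=> PA dgA; case: hP => _ Pcl _ Psub.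
have clA : A = closure A by apply/closure_id; exact: Pcl.
apply: Psub PA _ _; first exact: closed_closure.
by rewrite [X in _ `<=` X]clA; exact: closureS.
Qed.

Lemma CP_lift2 (op : R -> R -> R) (f g : T -> R) :
  (forall (f g : T -> R) x, {for x, continuous f} -> {for x, continuous g} ->
     {for x, continuous (fun y => op (f y) (g y))}) ->
  CP f -> CP g -> CP (fun y => op (f y) (g y)).
Proof.
move=> hop Pf Pg; case: hP => _ _ PU _.
have := PU _ _ Pf Pg; rewrite -closureU => Pfg.
apply: CP_discont_sub Pfg _ => x /= nc; apply: subset_closure.
apply: contrapT => /not_orP[cf cg]; apply: nc.
by apply: hop; apply: contrapT.
Qed.

Lemma CP_add f g : CP f -> CP g -> CP (fadd f g).
Proof. exact/CP_lift2/continuousD. Qed.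

Lemma CP_mul f g : CP f -> CP g -> CP (fmul f g).
Proof. exact/CP_lift2/continuousM. Qed.

Lemma CP_opp f : CP f -> CP (fun y => - f y).
Proof.
by move=> Pf; apply: (@CP_lift2 (fun a _ => - a) _ _ _ Pf Pf) => ? ? ? /continuousN.
Qed.

Lemma CP_max f g : CP f -> CP g -> CP (fun y => Num.max (f y) (g y)).
Proof. exact/CP_lift2/continuous_max. Qed.

Lemma CP_min f g : CP f -> CP g -> CP (fun y => Num.min (f y) (g y)).
Proof. exact/CP_lift2/continuous_min. Qed.

Lemma CP_cst (c : R) : CP (fun _ => c).
Proof.
case: hP => -[A PA] _ _ _.
by apply: CP_discont_sub PA _ => x /= []; exact: cvg_cst.
Qed.

Lemma CP_inv f : CP f -> (forall x, f x != 0) -> CP (fun x => (f x)^-1).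
Proof.
move=> Pf nz; apply: CP_discont_sub Pf _ => x /= nc; apply: subset_closure => c.
by apply: nc; exact: continuousV.
Qed.

Lemma is_unitP f : CP f -> is_unit P f <-> forall x, f x != 0.
Proof.
move=> Pf; split => [[_ [g [_ fg1]]] x|nz].
  apply/eqP => fx0; move: (congr1 (fun k => k x) fg1).
  by rewrite /fmul /fone fx0 mul0r => /eqP; rewrite eq_sym oner_eq0.
split => //; exists (fun x => (f x)^-1); split; first exact: CP_inv.
by apply: funext => x; rewrite /fmul /fone mulfV.
Qed.

Lemma nonunit_has_zero f : CP f -> ~ is_unit P f -> ZP f !=set0.
Proof.
move=> Pf nu; apply: contrapT => nz; apply: nu; apply/is_unitP => // x.
by apply/eqP => fx; apply: nz; exists x.
Qed.

Lemma ideal_fone (I : set (T -> R)) : is_ideal P I -> I fone -> I = CP.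
Proof.
move=> [IP _ _ Imul] I1; apply/seteqP; split => // g Pg.
by rewrite -[g](@funext _ _ _ _ (fun x => mulr1 (g x))); exact: Imul.
Qed.

Lemma ideal_unit (I : set (T -> R)) u : is_ideal P I -> I u -> is_unit P u -> I fone.
Proof.
move=> [_ _ _ Imul] Iu [_ [v [Pv uv1]]].
by rewrite -uv1 [fmul u v](@funext _ _ _ _ (fun x => mulrC (u x) (v x))); exact: Imul.
Qed.

Lemma ideal_sum_ideal (I J : set (T -> R)) :
  is_ideal P I -> is_ideal P J -> is_ideal P (ideal_sum I J).
Proof.
move=> [IP I0 Iadd Imul] [JP J0 Jadd Jmul]; split.
- by move=> _ [i [j [Ii Jj ->]]]; apply: CP_add; [exact: IP | exact: JP].
- by exists fzero, fzero; split => //; apply: funext => x; rewrite /fadd /fzero addr0.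
- move=> _ _ [i1 [j1 [Ii1 Jj1 ->]]] [i2 [j2 [Ii2 Jj2 ->]]].
  exists (fadd i1 i2), (fadd j1 j2); split; [exact: Iadd | exact: Jadd |].
  by apply: funext => x; rewrite /fadd addrACA.
- move=> _ c [i [j [Ii Jj ->]]] Pc.
  exists (fmul c i), (fmul c j); split; [exact: Imul | exact: Jmul |].
  by apply: funext => x; rewrite /fadd /fmul mulrDr.
Qed.

Definition fixed_ideal (x0 : T) : set (T -> R) := [set g | CP g /\ g x0 = 0].

Lemma fixed_ideal_maximal x0 : maximal_ideal P (fixed_ideal x0).
Proof.
have Mideal : is_ideal P (fixed_ideal x0).
  split.
  - by move=> g [].
  - by split; [exact: CP_cst |].
  - by move=> f g [Pf f0] [Pg g0]; split; [exact: CP_add | rewrite /fadd f0 g0 addr0].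
  - by move=> f g [Pf f0] Pg; split; [exact: CP_mul | rewrite /fmul f0 mulr0].
split; first by split => // -[_]; rewrite /fone => /eqP; rewrite oner_eq0.
move=> J [iJ J1] MJ; have [JP _ Jadd Jmul] := iJ; apply/seteqP; split => // g Jg.
split; first exact: JP.
apply: contrapT => gx0; apply: J1.
pose c := g x0.
have Jc : J (fun _ => c).
  have Jgc : J (fadd g (fun _ => - c)).
    by apply: MJ; split; [apply: CP_add; [exact: JP | exact: CP_cst] | rewrite /fadd subrr].
  have := Jadd _ _ Jg (Jmul _ _ Jgc (CP_cst (-1))); congr J; apply: funext => x.
  by rewrite /fadd /fmul mulN1r opprD opprK addrA subrr add0r.
apply: (ideal_unit iJ Jc).
by apply/is_unitP => [|_]; [exact: CP_cst | apply/eqP].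
Qed.

Lemma ideal_sum_subl (I J : set (T -> R)) : is_ideal P J -> I `<=` ideal_sum I J.
Proof.
move=> [_ J0 _ _] i Ii; exists i, fzero; split => //.
by apply: funext => x; rewrite /fadd /fzero addr0.
Qed.

Lemma ideal_sum_subr (I J : set (T -> R)) : is_ideal P I -> J `<=` ideal_sum I J.
Proof.
move=> [_ I0 _ _] j Jj; exists fzero, j; split => //.
by apply: funext => x; rewrite /fadd /fzero add0r.
Qed.

Definition principal (g : T -> R) : set (T -> R) :=
  [set k | exists c, CP c /\ k = fmul c g].

Lemma principal_ideal g : CP g -> is_ideal P (principal g).
Proof.
move=> Pg; split.
- by move=> _ [c [Pc ->]]; exact: CP_mul.
- exists fzero; split; first exact: CP_cst.
  by apply: funext => x; rewrite /fmul /fzero mul0r.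
- move=> _ _ [c1 [P1 ->]] [c2 [P2 ->]]; exists (fadd c1 c2); split; first exact: CP_add.
  by apply: funext => x; rewrite /fmul /fadd mulrDl.
- move=> _ d [c [Pc ->]] Pd; exists (fmul d c); split; first exact: CP_mul.
  by apply: funext => x; rewrite /fmul mulrA.
Qed.

Lemma principal_self g : principal g g.
Proof.
exists fone; split; first exact: CP_cst.
by apply: funext => x; rewrite /fmul /fone mul1r.
Qed.

(* The ideal M + (h) is the whole ring, so 1 = m + c h with m in M; then
   m^2 + a^2 lies in M and has no zero, as Z(a) is contained in Z(h). *)
Lemma maximal_ideal_zset (M : set (T -> R)) a h :
  maximal_ideal P M -> M a -> CP h -> ZP a `<=` ZP h -> M h.
Proof.
move=> [[iM M1] Mmax] Ma Ph ah; have [MP _ Madd Mmul] := iM.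
apply: contrapT => Mh.
pose J := ideal_sum M (principal h).
have iJ : is_ideal P J by apply: ideal_sum_ideal => //; exact: principal_ideal.
have J1 : J fone.
  apply: contrapT => J1; apply: Mh; rewrite -(Mmax J (conj iJ J1)).
    exact/(ideal_sum_subr iM)/principal_self.
  exact/ideal_sum_subl/principal_ideal.
have [m [_ [Mm [c [_ ->]] m_ch1]]] := J1.
pose u := fadd (fmul m m) (fmul a a).
have Mu : M u by apply: Madd; apply: Mmul => //; exact: MP.
apply: M1; apply: (ideal_unit iM Mu); apply/is_unitP => [|x].
  by apply: CP_add; apply: CP_mul; exact: MP.
apply/eqP; rewrite /u /fadd /fmul => /sqr_add_eq0[mx ax].
move: (congr1 (fun k => k x) m_ch1); rewrite /fadd /fmul /fone mx (ah x ax).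
by rewrite mulr0 addr0 => /eqP; rewrite oner_eq0.
Qed.

Definition mult_closed (S : set (T -> R)) : Prop :=
  [/\ S `<=` CP, S fone, ~ S fzero & forall f g, S f -> S g -> S (fmul f g)].

Lemma mult_closed_maximal S : mult_closed S -> exists S',
  [/\ mult_closed S', S `<=` S' & forall B, mult_closed B -> S' `<=` B -> B = S'].
Proof.
move=> [SP S1 S0 Smul].
have [A [SA Amax]] : exists A, mult_closed (S `|` A) /\
    forall B, A `<` B -> ~ mult_closed (S `|` B).
  (* Zorn is applied to the A with S `|` A closed, so that the empty chain is harmless. *)
  apply: (@Zorn_bigcup _ (fun A => mult_closed (S `|` A))) => F FP Ftot; split.
  - move=> y [Sy|[X FX Xy]]; first exact: SP.
    by have [+ _ _ _] := FP X FX; apply; right.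
  - by left.
  - case=> [//|[X FX X0]].
    by have [_ _ + _] := FP X FX; apply; right.
  - have mulX X f g : F X -> (S `|` X) f -> (S `|` X) g ->
        (S `|` \bigcup_(X in F) X) (fmul f g).
      move=> FX Xf Xg; have [_ _ _ /(_ f g Xf Xg)[?|?]] := FP X FX; first by left.
      by right; exists X.
    move=> f g [Sf|[X FX Xf]] [Sg|[Y FY Yg]].
    + by left; apply: Smul.
    + by apply: (mulX Y); [| left | right].
    + by apply: (mulX X); [| right | left].
    + have [XY|YX] := Ftot X Y FX FY.
      * by apply: (mulX Y); [| right; exact: XY | right].
      * by apply: (mulX X); [| right | right; exact: YX].
exists (S `|` A); split; [exact: SA | exact: subsetUl |].
move=> B mB SAB; apply/seteqP; split => //.
apply: contrapT => BSA; apply: (Amax B).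
  split; first by move=> x Ax; apply: SAB; right.
  by move=> BA; apply: BSA => x /BA ?; right.
by rewrite setUidr // => x Sx; apply: SAB; left.
Qed.

(* Otherwise the t with coz (a s) <= coz t for some s in S form a larger
   multiplicatively closed set, containing a. *)
Lemma maximal_mult_closed_annihilates S a : mult_closed S ->
  (forall B, mult_closed B -> S `<=` B -> B = S) ->
  CP a -> ~ S a -> exists2 s, S s & fmul a s = fzero.
Proof.
move=> [SP S1 _ Smul] Smax Pa Sa; apply: contrapT => no_ann.
pose B := [set t | CP t /\ exists2 s, S s & coz (fmul a s) `<=` coz t].
have SB : S `<=` B.
  by move=> t St; split; [exact: SP | exists t => //; rewrite coz_fmul; exact: subIsetr].
have mB : mult_closed B.
  split.
  - by move=> t [].
  - exact: SB.
  - move=> [_ [s Ss as0]]; apply: no_ann; exists s => //.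
    apply: funext => x; apply: contrapT => /as0.
    by rewrite /coz /fzero /=.
  - move=> f g [Pf [s1 Ss1 h1]] [Pg [s2 Ss2 h2]]; split; first exact: CP_mul.
    exists (fmul s1 s2); first exact: Smul.
    rewrite !coz_fmul => x [ax [s1x s2x]]; split.
      by apply: h1; rewrite coz_fmul.
    by apply: h2; rewrite coz_fmul.
apply: Sa; rewrite -(Smax B mB SB); split => //.
by exists fone => // x; rewrite /coz /fmul /fone /= mulr1.
Qed.

Lemma prime_ideal_compl_mult_closed Q : prime_ideal P Q -> mult_closed (CP `\` Q).
Proof.
move=> [[[_ Q0 _ _] Q1] Qprime]; split.
- by move=> h [].
- by split; [exact: CP_cst |].
- by case.
- move=> f g [Pf Qf] [Pg Qg]; split; first exact: CP_mul.
  by case/(Qprime _ _ Pf Pg).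
Qed.

Lemma maximal_mult_closed_compl_prime S : mult_closed S ->
  (forall B, mult_closed B -> S `<=` B -> B = S) -> prime_ideal P (CP `\` S).
Proof.
move=> mS Smax; have [_ S1 S0 Smul] := mS.
have ann := maximal_mult_closed_annihilates mS Smax.
have S_ann f s : S s -> fmul f s = fzero -> ~ S f.
  by move=> Ss fs0 Sf; apply: S0; rewrite -fs0; exact: Smul.
split; [split; [split|] |].
- by move=> h [].
- by split; [exact: CP_cst |].
- move=> f g [Pf Sf] [Pg Sg]; split; first exact: CP_add.
  have [s1 Ss1 fs1] := ann f Pf Sf; have [s2 Ss2 gs2] := ann g Pg Sg.
  apply: (S_ann _ _ (Smul _ _ Ss1 Ss2)); apply/fmul_eq0 => x.
  move/fmul_eq0: fs1 => /(_ x); move/fmul_eq0: gs2 => /(_ x).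
  by rewrite /fadd /fmul => -[->|->] [->|->]; rewrite ?(addr0, mulr0, mul0r); auto.
- move=> f g [Pf Sf] Pg; split; first exact: CP_mul.
  have [s Ss fs] := ann f Pf Sf.
  apply: (S_ann _ _ Ss); apply/fmul_eq0 => x.
  by move/fmul_eq0: fs => /(_ x); rewrite /fmul => -[->|->]; rewrite ?mulr0; auto.
- by move=> [].
- move=> f g Pf Pg [_ Sfg].
  have [Sf|] := pselect (S f); last by left.
  have [Sg|] := pselect (S g); last by right.
  by exfalso; apply: Sfg; exact: Smul.
Qed.

(* The complement of a maximal multiplicatively closed set is a minimal prime. *)
Lemma minimal_prime_disjoint S : mult_closed S ->
  exists Q, minimal_prime P Q /\ forall h, S h -> ~ Q h.
Proof.
move=> mS; have [S' [mS' SS' S'max]] := mult_closed_maximal mS.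
exists (CP `\` S'); split; last by move=> h Sh [_]; apply; exact: SS'.
split; first exact: maximal_mult_closed_compl_prime.
move=> Q' pQ' Q'Q.
have S'Q' : S' `<=` CP `\` Q'.
  by move=> h S'h; split; [case: mS' => + _ _ _; apply | move=> /Q'Q[_]].
have eS' := S'max _ (prime_ideal_compl_mult_closed pQ') S'Q'.
apply/seteqP; split => // h [Ph S'h].
by apply: contrapT => Q'h; apply: S'h; rewrite -eS'.
Qed.

(* If hb <> 0, a minimal prime avoiding the functions nonvanishing on coz (hb)
   contains ab = 0, hence a or b, and in both cases some such function. *)
Lemma Pset_annihilates a h b : CP a -> Pset P a h -> CP b -> fmul a b = fzero ->
  fmul h b = fzero.
Proof.
move=> Pa [Ph hQ] Pb ab0; apply: contrapT => /fun_neq0[y hby].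
pose S := [set k | CP k /\ coz (fmul h b) `<=` coz k].
have mS : mult_closed S.
  split.
  - by move=> k [].
  - by split; [exact: CP_cst | move=> x _; apply/eqP; exact: oner_neq0].
  - by move=> [_ /(_ y hby)].
  - move=> f g [Pf hbf] [Pg hbg]; split; first exact: CP_mul.
    by rewrite [X in _ `<=` X]coz_fmul subsetI.
have [Q [mQ QS]] := minimal_prime_disjoint mS.
have [[[_ Q0 _ Qmul] _] Qprime] := mQ.1.
have : Q (fmul a b) by rewrite ab0.
case/(Qprime _ _ Pa Pb) => [Qa|Qb].
  apply: (QS (fmul b h)); last exact: Qmul (hQ Q mQ Qa) Pb.
  split; first exact: CP_mul.
  by rewrite !coz_fmul setIC.
apply: (QS b) => //; split => //.
by rewrite coz_fmul; exact: subIsetr.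
Qed.

Lemma minimal_prime_zero_divisor Q f : minimal_prime P Q -> Q f ->
  exists b, [/\ CP b, ~ Q b & fmul f b = fzero].
Proof.
move=> mQ Qf; have [[[QP _ _ _] Q1] Qprime] := mQ.1.
apply: contrapT => no_ann.
pose S := [set k | CP k /\ exists b, [/\ CP b, ~ Q b & coz (fmul b f) `<=` coz k]].
have mS : mult_closed S.
  split.
  - by move=> k [].
  - split; first exact: CP_cst.
    by exists fone; split => //; [exact: CP_cst | move=> x _; apply/eqP; exact: oner_neq0].
  - move=> [_ [b [Pb Qb bf0]]]; apply: no_ann; exists b; split => //.
    apply: funext => x; apply: contrapT => fbx; apply: (bf0 x) => //.
    by rewrite /coz /fmul /= mulrC.
  - move=> g k [Pg [b1 [P1 Qb1 h1]]] [Pk [b2 [P2 Qb2 h2]]]; split; first exact: CP_mul.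
    exists (fmul b1 b2); split; first exact: CP_mul.
    + by case/(Qprime _ _ P1 P2).
    + rewrite !coz_fmul => x [[b1x b2x] fx]; split.
        by apply: h1; rewrite coz_fmul.
      by apply: h2; rewrite coz_fmul.
have [Q' [mQ' Q'S]] := minimal_prime_disjoint mS.
have [[[Q'P _ _ _] _] _] := mQ'.1.
have Q'Q : Q' `<=` Q.
  move=> h Q'h; apply: contrapT => Qh; apply: (Q'S h) => //; split; first exact: Q'P.
  by exists h; split => //; [exact: Q'P | rewrite coz_fmul; exact: subIsetl].
apply: (Q'S f); last by rewrite (mQ.2 Q' mQ'.1 Q'Q).
split; first exact: QP.
by exists fone; split => //; [exact: CP_cst | rewrite coz_fmul; exact: subIsetr].
Qed.

Lemma zero_divisor_intXP (f : T -> R) : zero_divisor P f -> intXP R P (ZP f) !=set0.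
Proof.
move=> [Pf [g [Pg /fun_neq0[y gy] /fmul_eq0 fg0]]].
by exists y, g; split => // z gz; case: (fg0 z).
Qed.

Lemma almost_PPE :
  almost_PP R P <-> forall f, CP f -> ZP f !=set0 -> zero_divisor P f.
Proof.
split => [aP f Pf zf | zd f Pf zf]; last exact/zero_divisor_intXP/zd.
have [y [g [Pg gy gZ]]] := aP f Pf zf.
split => //; exists g; split => [//| g0 |]; first by apply: gy; rewrite g0.
apply/fmul_eq0 => z; have [gz|gz] := pselect (g z = 0); first by right.
by left; exact: gZ.
Qed.

Lemma principal_zero_divisors (g : T -> R) :
  zero_divisor P g -> principal g `<=` zero_divisor P.
Proof.
move=> [Pg [w [Pw w0 gw0]]] _ [c [Pc ->]]; split; first exact: CP_mul.
exists w; split => //; apply/fmul_eq0 => x; move/fmul_eq0: gw0 => /(_ x).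
by rewrite /fmul => -[->|->]; rewrite ?mulr0 ?mul0r; auto.
Qed.

(* Split f along the cut-off [phi] of [f / f x1], which is 0 where [f] is
   small ([psi0 <> 0]) and 1 where [f] is close to [f x1] ([psi1 <> 0]). *)
Lemma sum_of_zero_divisors f x0 x1 : CP f -> f x0 = 0 -> f x1 != 0 ->
  exists g1 g2, [/\ fadd g1 g2 = f, g1 x0 = 0, g2 x0 = 0,
    zero_divisor P g1 & zero_divisor P g2].
Proof.
move=> Pf fx0 fx1.
pose u := fmul f (fun _ => (f x1)^-1).
pose phi y := Num.min (Num.max (4 * u y - 1) 0) 1.
pose psi0 y := Num.max (1 - 4 * u y) 0.
pose psi1 y := Num.max (2 * u y - 1) 0.
have Pu : CP u by apply: CP_mul => //; exact: CP_cst.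
have Pphi : CP phi.
  by apply: CP_min (CP_cst _); apply: CP_max (CP_cst _); apply: CP_add (CP_cst _);
    apply: CP_mul (CP_cst _) Pu.
have Ppsi0 : CP psi0.
  apply: CP_max (CP_cst _); apply: CP_add (CP_cst _) _.
  by apply: CP_opp; exact: CP_mul (CP_cst _) Pu.
have Ppsi1 : CP psi1.
  by apply: CP_max (CP_cst _); apply: CP_add (CP_cst _); apply: CP_mul (CP_cst _) Pu.
have ux0 : u x0 = 0 by rewrite /u /fmul fx0 mul0r.
have ux1 : u x1 = 1 by rewrite /u /fmul mulfV.
have psi0_phi y : psi0 y != 0 -> phi y = 0.
  rewrite /psi0 /phi; have [uy|uy] := leP (1 - 4 * u y) 0; first by rewrite eqxx.
  by move=> _; rewrite max_r ?min_l //; lra.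
have psi1_phi y : psi1 y != 0 -> phi y = 1.
  rewrite /psi1 /phi; have [uy|uy] := leP (2 * u y - 1) 0; first by rewrite eqxx.
  by move=> _; rewrite max_l ?min_r //; lra.
exists (fmul f phi), (fmul f (fun y => 1 - phi y)); split.
- by apply: funext => y; rewrite /fadd /fmul; ring.
- by rewrite /fmul fx0 mul0r.
- by rewrite /fmul fx0 mul0r.
- split; first exact: CP_mul.
  exists psi0; split => //.
    move=> /(congr1 (fun k => k x0)); rewrite /psi0 /fzero ux0 mulr0 subr0.
    by rewrite max_l // => /eqP; rewrite oner_eq0.
  apply/fmul_eq0 => y; have [->|/psi0_phi phiy] := eqVneq (psi0 y) 0; first by right.
  by left; rewrite /fmul phiy mulr0.
- split; first by apply: CP_mul => //; apply: CP_add (CP_cst _) _; exact: CP_opp.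
  exists psi1; split => //.
    move=> /(congr1 (fun k => k x1)); rewrite /psi1 /fzero ux1 mulr1.
    by rewrite max_l; [move=> /eqP; lra | lra].
  apply/fmul_eq0 => y; have [->|/psi1_phi phiy] := eqVneq (psi1 y) 0; first by right.
  by left; rewrite /fmul phiy subrr mulr0.
Qed.

(* If [a x = 0 <> h x], the function [a^2 + (h - h x)^2] vanishes at [x], so it
   has an annihilator [g <> 0]; then [a g = 0], hence [h g = 0], while [h] is
   the nonzero constant [h x] on [coz g]. *)
Lemma almost_PP_z0_ideal (I : set (T -> R)) :
  almost_PP R P -> z_ideal P I -> z0_ideal P I.
Proof.
move=> /almost_PPE zd [iI zI]; split => // a Ia h [Ph hQ].
have Pa : CP a by case: iI => + _ _ _; apply.
apply: (zI a Ia); split => // M mM Ma.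
apply: (maximal_ideal_zset mM Ma Ph) => x ax; apply: contrapT => hx.
pose d := fadd h (fun _ => - h x).
pose k := fadd (fmul a a) (fmul d d).
have Pd : CP d by exact: CP_add Ph (CP_cst _).
have Pk : CP k by apply: CP_add; exact: CP_mul.
have kx : ZP k x by rewrite /ZP /k /d /fadd /fmul /= ax subrr mulr0 addr0.
have [_ [g [Pg /fun_neq0[y gy] /fmul_eq0 kg0]]] := zd k Pk (ex_intro _ x kx).
have ag0 : fmul a g = fzero.
  apply/fmul_eq0 => z; have [kz|] := kg0 z; last by right.
  by left; move: kz; rewrite /k /fadd /fmul => /sqr_add_eq0[].
have /fmul_eq0/(_ y) := Pset_annihilates Pa (conj Ph hQ) Pg ag0.
case: (kg0 y) => [|//]; rewrite /k /d /fadd /fmul => /sqr_add_eq0[_ /eqP].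
by rewrite subr_eq0 => /eqP ->; case.
Qed.

Lemma maximal_ideal_z_ideal (M : set (T -> R)) : maximal_ideal P M -> z_ideal P M.
Proof. by move=> mM; split; [case: mM => -[] | move=> a Ma h [_]; exact]. Qed.

(* An element outside the zero divisors lies in no minimal prime, so its [P]-set
   is the whole ring. *)
Lemma z0_ideal_zero_divisors (I : set (T -> R)) : z0_ideal P I -> ~ I fone ->
  I `<=` zero_divisor P.
Proof.
move=> [[IP _ _ _] z0I] I1 f If; split; first exact: IP.
apply: contrapT => no_ann; apply/I1/(z0I f If); split; first exact: CP_cst.
move=> Q mQ Qf; have [b [Pb Qb fb0]] := minimal_prime_zero_divisor mQ Qf.
exfalso; apply: no_ann; exists b; split => // b0; apply: Qb; rewrite b0.
by case: mQ => -[[[]]].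
Qed.

Lemma maximal_zero_divisors_almost_PP :
  (forall M : set (T -> R), maximal_ideal P M -> M `<=` zero_divisor P) -> almost_PP R P.
Proof.
move=> max_zd; apply/almost_PPE => f Pf [x fx].
exact: (max_zd _ (fixed_ideal_maximal x)).
Qed.

Lemma almost_PP_ideal_sum (I J : set (T -> R)) :
  almost_PP R P -> is_ideal P I -> is_ideal P J ->
  ideal_sum I J = CP \/ ideal_sum I J `<=` zero_divisor P.
Proof.
move=> /almost_PPE zd iI iJ; have iIJ := ideal_sum_ideal iI iJ.
have [[u IJu uu]|no_unit] := pselect (exists2 u, ideal_sum I J u & is_unit P u).
  by left; apply/ideal_fone/(ideal_unit iIJ IJu uu).
right => k IJk; have Pk : CP k by case: iIJ => + _ _ _; apply.
by apply/zd/nonunit_has_zero => // uk; apply: no_unit; exists k.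
Qed.

Lemma ideal_sum_almost_PP :
  (forall I J : set (T -> R), is_ideal P I -> is_ideal P J ->
    I `<=` zero_divisor P -> J `<=` zero_divisor P ->
    ideal_sum I J = CP \/ ideal_sum I J `<=` zero_divisor P) -> almost_PP R P.
Proof.
move=> sum_zd; apply/almost_PPE => f Pf [x0 fx0].
have [[x1 /eqP fx1]|f0] := pselect (exists x1, f x1 <> 0); last first.
  split => //; exists fone; split; [exact: CP_cst | | ].
    by move=> /(congr1 (fun k => k x0)) /eqP; rewrite oner_eq0.
  apply/fmul_eq0 => x; left; apply: contrapT => fx; apply: f0; by exists x.
have [g1 [g2 [fg g1x0 g2x0 zd1 zd2]]] := sum_of_zero_divisors Pf fx0 fx1.
have [Pg1 Pg2] : CP g1 /\ CP g2 by case: zd1; case: zd2.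
have [IJ1|] := sum_zd _ _ (principal_ideal Pg1) (principal_ideal Pg2)
  (principal_zero_divisors zd1) (principal_zero_divisors zd2); last first.
  by apply; exists g1, g2; split; rewrite ?fg //; exact: principal_self.
have : ideal_sum (principal g1) (principal g2) fone by rewrite IJ1; exact: CP_cst.
move=> [_ [_ [[c1 [_ ->]] [c2 [_ ->]] /(congr1 (fun k => k x0))]]].
by rewrite /fone /fadd /fmul g1x0 g2x0 !mulr0 addr0 => /eqP; rewrite oner_eq0.
Qed.

Lemma almost_PP_Pset_Ann f : almost_PP R P -> CP f -> ~ is_unit P f ->
  exists g, [/\ CP g, g <> fzero & Pset P f `<=` Ann P g].
Proof.
move=> /almost_PPE zd Pf nu.
have [_ [g [Pg g0 fg0]]] := zd f Pf (nonunit_has_zero Pf nu).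
exists g; split => // h Ph; split; first by case: Ph.
exact: Pset_annihilates Pf Ph Pg fg0.
Qed.

Lemma Pset_Ann_almost_PP :
  (forall f, CP f -> ~ is_unit P f ->
    exists g, [/\ CP g, g <> fzero & Pset P f `<=` Ann P g]) -> almost_PP R P.
Proof.
move=> ann; apply/almost_PPE => f Pf [x fx].
have nu : ~ is_unit P f by move=> /(is_unitP Pf)/(_ x); rewrite fx eqxx.
have [g [Pg g0 /(_ f)]] := ann f Pf nu.
case=> [|_ fg0]; first by split => // Q.
by split => //; exists g.
Qed.

End ring_of_functions.

Theorem theorem2p15 (R : realType) (T : topologicalType) (P : set (set T))
  (hT1 : @accessible_space T) (hP : closed_ideal P) :
  [<-> @almost_PP R T P;
       forall I, @z_ideal R T P I -> @z0_ideal R T P I;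
       forall M, @maximal_ideal R T P M -> @z0_ideal R T P M;
       forall M, @maximal_ideal R T P M -> M `<=` @zero_divisor R T P;
       forall I J, @is_ideal R T P I -> @is_ideal R T P J ->
         I `<=` @zero_divisor R T P -> J `<=` @zero_divisor R T P ->
         @ideal_sum R T I J = @CP R T P \/ @ideal_sum R T I J `<=` @zero_divisor R T P;
       forall f, @CP R T P f -> ~ @is_unit R T P f ->
         exists g, [/\ @CP R T P g, g <> @fzero R T & @Pset R T P f `<=` @Ann R T P g]].
Proof.
tfae.
- by move=> aP I; exact: almost_PP_z0_ideal.
- by move=> z_z0 M /maximal_ideal_z_ideal; exact: z_z0.
- by move=> max_z0 M mM; exact: z0_ideal_zero_divisors (max_z0 M mM) mM.1.2.
- move=> /(maximal_zero_divisors_almost_PP hP) aP I J iI iJ _ _.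
  exact: almost_PP_ideal_sum.
- move=> /(ideal_sum_almost_PP hP) aP f; exact: almost_PP_Pset_Ann.
- exact: Pset_Ann_almost_PP.
Qed.
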